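(* Let $F$ be a field of characteristic $2$, $R$ a commutative $F$-algebra, $a,b\in R$, $T=R[\alpha]:=R[t]/(t^2+t+a)$ with $\alpha$ the image of $t$, and $x+y\alpha\in T^\times$ (with $x,y\in R$) such that $x^2+xy+ay^2=u^2+uv+bv^2$ for some $u,v\in R$. If $v+y\in R^\times$, then $(v+y)(x+y\alpha)\in N_T(b)$. In particular, \[\{b,x+y\alpha\}_T=\{b,v+y\}_T\] in $\operatorname{Br}(T)$.
   Context: For a commutative $F$-algebra $S$ (with $\operatorname{char}F=2$), $c\in S$ and $d\in S^\times$, $[c,d)_S$ denotes the quaternion algebra $S\oplus Si\oplus Sj\oplus Sk$ with multiplication $i^2+i=c$, $j^2=d$, $ij=k=ji+j$; its class in the Brauer group $\operatorname{Br}(S)$ is denoted $\{c,d\}_S$. $N_S(c)$ denotes the subgroup of $S^\times$ consisting of all units of the form $X^2+XY+cY^2$ with $X,Y\in S$ (the image of the norm map from $(S[t]/(t^2+t+c))^\times$). *)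

From mathcomp Require Import all_boot all_order all_algebra.
Set Implicit Arguments. Unset Strict Implicit. Unset Printing Implicit Defensive.
Import GRing.Theory.
Local Open Scope ring_scope.

(* The quadratic extension T = R[alpha] = R[t]/(t^2 + t + a) of a commutative
   ring R, represented on the free R-module R * R with basis (1, alpha):
   the pair (x, y) stands for x + y alpha.  Multiplication uses
   alpha^2 = - alpha - a. *)
Section QuadExt.
Variable R : comPzRingType.

Definition qadd (p q : R * R) : R * R := (p.1 + q.1, p.2 + q.2).
Definition qmul (a : R) (p q : R * R) : R * R :=
  (p.1 * q.1 - a * (p.2 * q.2), p.1 * q.2 + p.2 * q.1 - p.2 * q.2).
Definition qone : R * R := (1, 0).
Definition qemb (r : R) : R * R := (r, 0).

Definition is_unitR (r : R) : Prop := exists s : R, r * s = 1.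

Definition qunit (a : R) (z : R * R) : Prop := exists w, qmul a z w = qone.

Definition in_NT (a b : R) (z : R * R) : Prop :=
  qunit a z /\
  exists X Y : R * R,
    qadd (qadd (qmul a X X) (qmul a X Y)) (qmul a (qemb b) (qmul a Y Y)) = z.
End QuadExt.

From mathcomp Require Import all_boot all_order all_algebra.
From mathcomp Require Import ring.
Local Open Scope ring_scope.
Import GRing.Theory.

(* A unit of R times a unit of T is a unit of T, so only the norm-form
   representation needs a witness.  Take X = (x + u) + y alpha and Y = v:
   in characteristic 2, alpha^2 = alpha + a, and
   X^2 + X Y + b Y^2 = (x^2 + a y^2 + u^2 + u v + b v^2 + v x) + y (v + y) alpha,
   whose constant term is (v + y) x once u^2 + u v + b v^2 is replaced by
   x^2 + x y + a y^2. *)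

Section QuadExtTheory.
Variable R : comPzRingType.

Lemma qunit_mul_emb (a r : R) (z : R * R) :
  is_unitR r -> qunit a z -> qunit a (qmul a (qemb r) z).
Proof.
case: z => x y [s rs1] [[p q]].
rewrite /qmul /qone /= => -[zw1 zw2].
exists (s * p, s * q); rewrite /qmul /qemb /qone /=; congr (_, _).
  transitivity (r * s * (x * p - a * (y * q))); first by ring.
  by rewrite zw1 rs1 mulr1.
transitivity (r * s * (x * q + y * p - y * q)); first by ring.
by rewrite zw2 mulr0.
Qed.

Hypothesis char2 : 2 = 0 :> R.

Lemma qnorm_form_shift (a b x y u v : R) :
  x ^+ 2 + x * y + a * y ^+ 2 = u ^+ 2 + u * v + b * v ^+ 2 ->
  qadd (qadd (qmul a (x + u, y) (x + u, y)) (qmul a (x + u, y) (v, 0)))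
       (qmul a (qemb b) (qmul a (v, 0) (v, 0)))
  = qmul a (qemb (v + y)) (x, y).
Proof.
move=> norm_eq; rewrite /qmul /qadd /qemb /=; congr (_, _).
  transitivity ((v + y) * x + ((u ^+ 2 + u * v + b * v ^+ 2) -
     (x ^+ 2 + x * y + a * y ^+ 2)) + 2 * (x ^+ 2 + x * u)); first by ring.
  by rewrite -norm_eq subrr char2; ring.
transitivity ((v + y) * y + 2 * ((x + u) * y - y ^+ 2)); first by ring.
by rewrite char2; ring.
Qed.

End QuadExtTheory.

Theorem lemma3p3 (F : fieldType) (hF : (2 \in [pchar F])%N)
  (R : comAlgType F) (a b x y u v : R) :
  qunit a (x, y) ->
  x ^+ 2 + x * y + a * y ^+ 2 = u ^+ 2 + u * v + b * v ^+ 2 ->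
  is_unitR (v + y) ->
  in_NT a b (qmul a (qemb (v + y)) (x, y)).
Proof.
move=> xy_unit norm_eq vy_unit.
have char2 : 2 = 0 :> R by apply: pcharf0; rewrite pchar_lalg.
split; first exact: qunit_mul_emb.
exists (x + u, y), (v, 0).
exact: qnorm_form_shift.
Qed.
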